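(* Let $\eta\in\partial A_*$ and let $z\in\Lambda$ be such that $c_z(\eta)=1$ and $\eta^z\notin A_*$. Let $I=[a,b]\subseteq\{0,1,\dots,L\}$ be an integer interval containing $z$ and $z-1$, let $\ell=b-a$, $I_-=(a-\ell,a)\cap\{0,\dots,L\}$, $I_+=(b,b+\ell]\cap\{0,\dots,L\}$. Then either $I=\{0,1,\dots,L\}$, or $\eta$ (with the convention $\eta_0=0$) has at least one zero in $I_-\cup I_+$.
   Context: Fix $q\in(0,1/2)$, $\Lambda=\{1,\dots,L\}$, $\Omega_\Lambda=\{0,1\}^\Lambda$. East constraints: $c_1\equiv1$, $c_x(\sigma)=1-\sigma_{x-1}$ for $x\ge2$; $\eta^x$ is $\eta$ with the spin at $x$ flipped. Deterministic dynamics: set $\eta_0:=0$. The gap at $x$ is $g_x(\eta)=\min\{d>0:\eta_{x-d}=0\}$. For $(d,x)\in\{1,\dots,L\}^2$, $\phi_{d,x}(\eta)$ sets $\eta_x=1$ if $\eta_x=0$ and $g_x(\eta)=d$, otherwise leaves $\eta$ unchanged. Order $\{1,\dots,L\}^2$ by $(d_1,x_1)\prec(d_2,x_2)$ iff $d_1<d_2$, or $d_1=d_2$ and $x_1>x_2$; list it as $\alpha_1\prec\dots\prec\alpha_{L^2}$, set $\eta[0]=\eta$, $\eta[k]=\phi_{\alpha_k}(\eta[k-1])$, and write $\Phi(\eta;d,x)=\eta[k]$ when $\alpha_k=(d,x)$. $A_*=\{\eta:\Phi(\eta;L-1,1)=\mathbb 10\}$, with $\mathbb 10$ having $\sigma_x=1$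 for $x<L$, $\sigma_L=0$. $\partial A_*=\{\eta\in A_*:\exists\,x\in\Lambda$ with $c_x(\eta)=1$ and $\eta^x\notin A_*\}$. *)

From mathcomp Require Import all_boot.
Set Implicit Arguments. Unset Strict Implicit. Unset Printing Implicit Defensive.

(* A configuration on Lambda = {1..L} is represented by eta : nat -> bool
   (true = 1, false = 0); only the values at 1..L are ever read.
   The convention eta_0 := 0 is imposed by [ext]. *)
Definition config := nat -> bool.

Definition ext (eta : config) : config :=
  fun x => if x == 0 then false else eta x.

Definition flip (eta : config) (x : nat) : config :=
  fun y => if y == x then ~~ eta y else eta y.

Definition cE (x : nat) (eta : config) : bool :=
  (x == 1) || ~~ eta (x - 1).

(* gap g_x(eta) = min {d > 0 : eta_{x-d} = 0} (with eta_0 = 0), for x >= 1: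
   the first d in 1..x with ext eta (x - d) = false. *)
Definition gap (eta : config) (x : nat) : nat :=
  (find (fun i => ~~ ext eta (x - i.+1)) (iota 0 x)).+1.

Definition phi (d x : nat) (eta : config) : config :=
  if (~~ ext eta x) && (gap eta x == d)
  then (fun y => if y == x then true else eta y)
  else eta.

Definition alphas (L : nat) : seq (nat * nat) :=
  [seq (d, x) | d <- iota 1 L, x <- rev (iota 1 L)].

(* Phi(eta; d, x) = eta[k] where alpha_k = (d, x) *)
Definition PhiAt (L : nat) (eta : config) (d x : nat) : config :=
  foldl (fun e a => phi a.1 a.2 e) eta
        (take (index (d, x) (alphas L)).+1 (alphas L)).

Definition inAstar (L : nat) (eta : config) : Prop :=
  forall y, 1 <= y <= L -> PhiAt L eta (L - 1) 1 y = (y < L).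

Definition inBoundary (L : nat) (eta : config) : Prop :=
  inAstar L eta /\
  exists x, 1 <= x <= L /\ cE x eta /\ ~ inAstar L (flip eta x).

From mathcomp Require Import all_boot zify.
Set Implicit Arguments. Unset Strict Implicit.

(* The sweep Phi(.; L-1, 1) consists of the rounds d = 1, ...,
   L-1; round d visits the sites from right to left and fills every empty
   site whose gap equals d.  Since a round only changes sites to the right of
   those it still has to visit, the set of empty sites after r rounds has a
   closed recursive description [empty_after]: an empty site u survives
   round r+1 unless u - (r+1) survived round r.  Hence membership in A_*
   depends only on the set of empty sites after any intermediate round
   [inAstar_transfer].

   For the theorem, suppose eta has no zero in I_- u I_+, with l = b - a.
   - Outside I, flipping z is invisible during the first l rounds: the
     information it creates travels at most l sites, and I_+ is full
     [flip_invisible_outside].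
   - Inside I, to the right of z, the leftmost zero m of eta in [a, z-1]
     survives l-1 rounds (I_- is full), and then fills [z, b] at round l,
     both for eta and for eta^z [interval_filled].
   So eta and eta^z have the same empty sites after round l <= L-1, and
   eta in A_* forces eta^z in A_*, a contradiction unless I = {0..L}. *)

(* [empty_after e r u]: site u of e (with e_0 = 0) is empty after rounds
   1, ..., r of the deterministic dynamics. *)
Fixpoint empty_after (e : config) (r u : nat) : bool :=
  match r with
  | 0 => ~~ ext e u
  | r'.+1 => empty_after e r' u &&
      ((u == 0) || (r'.+1 <= u) && ~~ empty_after e r' (u - r'.+1))
  end.

Section EmptySites.

Variable e : config.

Lemma empty_after_origin r : empty_after e r 0.
Proof. by elim: r => //= r ->. Qed.

Lemma empty_after_mono r s u : r <= s -> empty_after e s u -> empty_after e r u.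
Proof.
move=> /subnK <-; elim: (s - r) => // k IH /= /andP[H _]; exact: IH.
Qed.

Lemma empty_after_initial r u : empty_after e r u -> ~~ ext e u.
Proof. exact: empty_after_mono (leq0n r). Qed.

Lemma empty_after_sep r p u :
  empty_after e r p -> empty_after e r u -> u < p -> u + r < p.
Proof.
elim: r p u => [|r IH] p u; first by rewrite addn0.
move=> /= /andP[Hp Hp_round] /andP[Hu _] Hup.
have := IH _ _ Hp Hu Hup; rewrite leq_eqVlt => /orP[/eqP Ep|]; last by rewrite addnS.
move: Hp_round; have -> : (p == 0) = false by apply/eqP; lia.
have -> : p - r.+1 = u by lia.
by rewrite Hu andbF.
Qed.

Lemma empty_after_small r u : 1 <= u <= r -> empty_after e r u = false.
Proof.
case/andP=> Hu1 Hur; apply/negP => /(empty_after_mono Hur).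
by case: u Hu1 {Hur} => // u _ /= /andP[_]; rewrite subnn empty_after_origin andbF.
Qed.

End EmptySites.

(* Within round d+1, when the sites below x are empty exactly where they are
   after d rounds and x itself is still empty, the gap at x is d+1 exactly
   when x - (d+1) is empty after d rounds (closer zeros are excluded by
   [empty_after_sep]). *)
Lemma gap_round e eta d x : 1 <= x ->
  (forall u, u < x -> ~~ ext e u = empty_after eta d u) -> empty_after eta d x ->
  (gap e x == d.+1) = (d.+1 <= x) && empty_after eta d (x - d.+1).
Proof.
move=> Hx He Hsx; rewrite /gap eqSS.
set P := fun i => ~~ ext e (x - i.+1).
have Pi i : i < x -> P i = empty_after eta d (x - i.+1) by move=> Hi; rewrite /P He //; lia.
have Hhas : has P (iota 0 x).
  apply/hasP; exists x.-1; first by rewrite mem_iota; lia.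
  by rewrite /P /ext; have -> : x - x.-1.+1 = 0 by lia.
have Hlt : find P (iota 0 x) < x by rewrite -[x in _ < x](size_iota 0) -has_find.
have Pfind : P (find P (iota 0 x)) by have := nth_find 0 Hhas; rewrite nth_iota.
have Pnone i : i < find P (iota 0 x) -> ~~ P i.
  move=> Hi; have Hix : i < x := ltn_trans Hi Hlt.
  by have := before_find 0 Hi; rewrite nth_iota // => ->.
apply/idP/idP => [/eqP Hf|/andP[Hdx Hs]].
- have Hdx : d < x by rewrite -Hf.
  by move: Pfind; rewrite Hf Pi // Hdx.
- have Pd : P d by rewrite Pi.
  have Hle : find P (iota 0 x) <= d by rewrite leqNgt; apply/negP => /Pnone; rewrite Pd.
  rewrite eqn_leq Hle /= leqNgt; apply/negP => Hk.
  move: Pfind; rewrite Pi // => Hz.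
  by have := empty_after_sep Hsx Hz; lia.
Qed.

Definition step (e : config) (p : nat * nat) : config := phi p.1 p.2 e.

Lemma ext_phi_other d x e y : y != x -> ext (phi d x e) y = ext e y.
Proof.
move=> Hy; rewrite /ext /phi; case: (y == 0) => //.
by case: (_ && _) => //; rewrite (negbTE Hy).
Qed.

(* Correctness of one round d+1 on the sites n, n-1, ..., 1: sites above n
   have already been treated, sites up to n are as after d rounds. *)
Lemma round_correct eta L d n : n <= L -> forall e,
  (forall u, u <= n -> ~~ ext e u = empty_after eta d u) ->
  (forall u, n < u <= L -> ~~ ext e u = empty_after eta d.+1 u) ->
  forall u, u <= L ->
  ~~ ext (foldl step e [seq (d.+1, x) | x <- rev (iota 1 n)]) u = empty_after eta d.+1 u.
Proof.
elim: n => [|n IH] Hn e Hlow Hhigh u Hu.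
  by case: u Hu => [|u] Hu; [rewrite empty_after_origin | exact: Hhigh].
rewrite -[n.+1]addn1 iotaD rev_cat /= add1n.
apply: IH => //; first by lia.
  by move=> v Hv; rewrite /step ext_phi_other /=; [apply: Hlow | apply/eqP]; lia.
move=> v /andP[Hv1 Hv2]; have [->|Hne] := eqVneq v n.+1; last first.
  by rewrite /step ext_phi_other /=; [apply: Hhigh | apply/eqP]; lia.
have Hx := Hlow n.+1 (leqnn _); rewrite /step /= /phi.
case Hs: (empty_after eta d n.+1); rewrite Hs /= in Hx; last by rewrite Hx.
rewrite Hx /= (gap_round (eta := eta)) // => [|w Hw]; last by apply: Hlow; lia.
have Hd : d < n.+1.
  by rewrite ltnNge; apply/negP => Hdn; rewrite empty_after_small in Hs; lia.
rewrite Hd /=; case: ifP => _; first by rewrite /ext eqxx.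
by rewrite Hx.
Qed.

Definition first_rounds (L k : nat) : seq (nat * nat) :=
  [seq (d, x) | d <- iota 1 k, x <- rev (iota 1 L)].

Lemma first_roundsS L k :
  first_rounds L k.+1 = first_rounds L k ++ [seq (k.+1, x) | x <- rev (iota 1 L)].
Proof.
by rewrite /first_rounds -[k.+1]addn1 iotaD allpairs_cat /= cats0 add1n addn1.
Qed.

Lemma first_rounds_empty eta L k u : u <= L ->
  ~~ ext (foldl step eta (first_rounds L k)) u = empty_after eta k u.
Proof.
elim: k u => [|k IH] u Hu //.
rewrite first_roundsS foldl_cat.
by apply: (round_correct (leqnn L)) => // v; lia.
Qed.

(* Phi(.; L-1, 1) is obtained after exactly the first L-1 rounds. *)
Lemma alphas_prefix n :
  take (index (n.+1, 1) (alphas n.+2)).+1 (alphas n.+2) = first_rounds n.+2 n.+1.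
Proof.
set P := first_rounds n.+2 n ++ [seq (n.+1, x) | x <- rev (iota 2 n.+1)].
have HR : first_rounds n.+2 n.+1 = rcons P (n.+1, 1).
  rewrite first_roundsS /P -cats1 -catA; congr (_ ++ _).
  by rewrite (_ : iota 1 n.+2 = 1 :: iota 2 n.+1) // rev_cons map_rcons cats1.
have Hnot : (n.+1, 1) \notin P.
  rewrite mem_cat negb_or; apply/andP; split.
  - apply/negP => /allpairsP [[d x] [/= Hd _ [E1 E2]]].
    by move: Hd; rewrite mem_iota -E1; lia.
  - by apply/negP => /mapP [x Hx [E]]; move: Hx; rewrite mem_rev mem_iota -E.
rewrite /alphas -/(first_rounds n.+2 n.+2) first_roundsS HR -cats1 -catA cat1s.
rewrite index_cat (negbTE Hnot) /= eqxx addn0.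
by rewrite take_cat ltnNge leqnSn /= subSnn /= take0.
Qed.

Lemma PhiAt_empty_after e n y : 1 <= y <= n.+2 ->
  PhiAt n.+2 e (n.+2 - 1) 1 y = ~~ empty_after e n.+1 y.
Proof.
move=> /andP[Hy1 Hy2].
rewrite /PhiAt subn1 alphas_prefix -(first_rounds_empty e n.+1 Hy2) negbK.
by rewrite /ext; case: y Hy1 Hy2.
Qed.

Lemma empty_after_agree_later e e' L r0 :
  (forall u, u <= L -> empty_after e r0 u = empty_after e' r0 u) ->
  forall k u, u <= L -> empty_after e (r0 + k) u = empty_after e' (r0 + k) u.
Proof.
move=> H; elim=> [|k IH] u Hu; first by rewrite addn0 H.
rewrite addnS /= IH //; case: (u == 0) => //; case: (_ <= u) => //=.
by rewrite IH //; lia.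
Qed.

Lemma inAstar_transfer L r e e' : 0 < r <= L.-1 ->
  (forall u, u <= L -> empty_after e r u = empty_after e' r u) ->
  inAstar L e -> inAstar L e'.
Proof.
case: L => [|[|n]] /andP[Hr HrL]; [lia | lia |].
move=> /empty_after_agree_later Hagree HA y Hy; rewrite -(HA y Hy).
rewrite !PhiAt_empty_after //; have := Hagree (n.+1 - r) y.
by rewrite subnKC // => ->; case/andP: Hy.
Qed.

Lemma ext_flip e z y : y != z -> ext (flip e z) y = ext e y.
Proof. by move=> H; rewrite /ext /flip (negbTE H). Qed.

Lemma flip_invisible_outside eta z b l L : z <= b ->
  (forall y, y <= L -> b < y <= b + l -> ext eta y) ->
  forall r, r <= l -> forall u, u <= L -> (u < z) || (b < u) ->
  empty_after eta r u = empty_after (flip eta z) r u.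
Proof.
move=> Hzb Hfull; elim=> [|r IH] Hrl u Hu Hout /=.
  by rewrite ext_flip //; apply/eqP; lia.
rewrite -IH //; last by lia.
case: (u == 0) => //; case Hru: (r.+1 <= u) => //=.
case Ho: ((u - r.+1 < z) || (b < u - r.+1)); first by rewrite -IH //; lia.
suff -> : empty_after eta r u = false by [].
by apply/negP => /empty_after_initial; rewrite Hfull //; lia.
Qed.

Lemma empty_survives th a l m : a <= m -> ~~ ext th m ->
  (forall y, y < m -> a < y + l -> ext th y) ->
  forall r, r < l -> empty_after th r m.
Proof.
move=> Ham Hm Hleft; elim=> [|r IH] Hr //=.
rewrite IH; last by lia.
have [//|Hm0] := eqVneq m 0.
have Hrm : r < m.
  rewrite ltnNge; apply/negP => Hmr.
  by have := Hleft 0; rewrite /ext /=; lia.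
by rewrite Hrm /=; apply/negP => /empty_after_initial; rewrite Hleft //; lia.
Qed.

Lemma empty_fills_right th a b m : a <= m -> 1 <= b - a ->
  empty_after th (b - a).-1 m ->
  forall p, m < p <= b -> empty_after th (b - a) p = false.
Proof.
move=> Ham; case Hk: (b - a) => [|k] //= _ Hm p /andP[Hmp Hpb].
apply/negP => /andP[Hp Hround].
have Hsep := empty_after_sep Hp Hm Hmp.
have E : p - k.+1 = m by lia.
by move: Hround; rewrite E Hm andbF orbF => /eqP; lia.
Qed.

Lemma interval_filled eta th a b z :
  1 <= z -> a <= z - 1 -> z <= b -> ~~ ext eta (z - 1) ->
  (forall y, a < y + (b - a) -> y < a -> ext eta y) ->
  (forall y, y < z -> ext th y = ext eta y) ->
  forall p, z <= p <= b -> empty_after th (b - a) p = false.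
Proof.
move=> Hz Haz Hzb Hz0 Hleft Hth p Hp.
have Hex : exists m, (a <= m) && ~~ ext eta m by exists (z - 1); rewrite Haz.
case: (ex_minnP Hex) => m /andP[Ham Hm] Hmin.
have Hmz : m <= z - 1 by apply: Hmin; rewrite Haz.
apply: (empty_fills_right Ham); [lia | | lia].
apply: (@empty_survives th a (b - a)) => //; [by rewrite Hth //; lia | | lia].
move=> y Hy Hyl; rewrite Hth; last by lia.
case: (leqP a y) => Hay; last exact: Hleft.
by apply/negPn/negP => Hy0; have := Hmin y; rewrite Hay Hy0 => /(_ isT); lia.
Qed.

Lemma flip_agree_after eta L z a b :
  1 <= z -> cE z eta -> a <= z - 1 -> z <= b ->
  (forall y, y <= L -> (a < y + (b - a) /\ y < a) \/ (b < y /\ y <= b + (b - a)) ->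
     ext eta y) ->
  forall u, u <= L -> empty_after eta (b - a) u = empty_after (flip eta z) (b - a) u.
Proof.
move=> Hz HcE Haz Hzb Hfull u Hu.
have Hz0 : ~~ ext eta (z - 1).
  by move: HcE; rewrite /cE /ext; case: (eqVneq z 1) => [->|Hz1] //=; case: eqP; lia.
case Hout: ((u < z) || (b < u)).
  apply: (@flip_invisible_outside eta z b (b - a) L Hzb) => // y Hy Hyb.
  by apply: Hfull => //; right; lia.
have Hleft y : a < y + (b - a) -> y < a -> ext eta y.
  by move=> H1 H2; apply: Hfull; [lia | left].
rewrite !(interval_filled Hz Haz Hzb Hz0 Hleft) //; try lia.
by move=> y Hy; rewrite ext_flip //; apply/eqP; lia.
Qed.

Theorem mainTheorem15 (L : nat) (eta : config) (z a b : nat) :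
  inBoundary L eta ->
  1 <= z <= L -> cE z eta -> ~ inAstar L (flip eta z) ->
  a <= b -> b <= L -> a <= z - 1 -> z <= b ->
  (a = 0 /\ b = L) \/
  exists y, y <= L /\
    ((a < y + (b - a) /\ y < a) \/ (b < y /\ y <= b + (b - a))) /\
    ext eta y = false.
Proof.
move=> [HA _] /andP[Hz1 _] HcE HnA _ HbL Haz Hzb.
have [/andP[/eqP -> /eqP ->]|Hproper] := boolP ((a == 0) && (b == L)); first by left.
right.
set near := fun y => ((a < y + (b - a)) && (y < a) || (b < y) && (y <= b + (b - a)))
                     && ~~ ext eta y.
have [/hasP[y Hy /andP[Hwin Hy0]]|/hasPn Hnone] := boolP (has near (iota 0 L.+1)).
  exists y; split; first by move: Hy; rewrite mem_iota; lia.
  by split; [case/orP: Hwin => /andP[]; [left | right] | exact: negbTE].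
exfalso; apply/HnA/(@inAstar_transfer L (b - a) eta _ _ _ HA); first by lia.
apply: (flip_agree_after Hz1 HcE Haz Hzb) => y HyL Hwin.
have := Hnone y; rewrite mem_iota /near => /(_ ltac:(lia)).
by rewrite negb_and negbK => /orP[|//]; case: Hwin => -[-> ->]; rewrite ?orbT.
Qed.
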